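(* Let $G=(V,E)$ be an undirected graph having a strongly connected orientation. A strongly connected orientation $D$ of $G$ is decreasingly minimal among the strongly connected orientations of $G$ if and only if there are no nodes $s,t$ with $\varrho_D(t)\ge\varrho_D(s)+2$ such that $D$ contains two arc-disjoint directed paths from $s$ to $t$.
   Context: $\varrho_D(v)$ is the number of arcs with head $v$. An orientation is decreasingly minimal among a class if its in-degree vector has largest component as small as possible within the class, then second largest as small as possible, and so on. *)

From mathcomp Require Import all_boot.
Set Implicit Arguments. Unset Strict Implicit. Unset Printing Implicit Defensive.

(* An undirected (multi)graph G = (V, E) is given by finite types V, E and
   the two endpoints  end1 e, end2 e  of every edge e.  An orientation is a
   function  D : E -> bool : D e = true orients e from end1 e to end2 e,
   D e = false orients e from end2 e to end1 e. *)

Section Orient.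
Variables (V E : finType) (end1 end2 : E -> V).

Definition arc_tail (D : E -> bool) (e : E) : V := if D e then end1 e else end2 e.
Definition arc_head (D : E -> bool) (e : E) : V := if D e then end2 e else end1 e.

Definition indeg (D : E -> bool) (v : V) : nat := #|[set e | arc_head D e == v]|.

Fixpoint dwalk (D : E -> bool) (x t : V) (p : seq E) : bool :=
  match p with
  | [::] => x == t
  | e :: p' => (arc_tail D e == x) && dwalk D (arc_head D e) t p'
  end.

Definition dpath (D : E -> bool) (s t : V) (p : seq E) : bool :=
  dwalk D s t p && uniq (s :: map (arc_head D) p).

Definition strongly_connected (D : E -> bool) : Prop :=
  forall x y : V, exists p : seq E, dpath D x y p.

Definition sorted_indeg (D : E -> bool) : seq nat :=
  sort (fun a b => b <= a) [seq indeg D v | v <- enum V].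

Fixpoint lex_le (s1 s2 : seq nat) : bool :=
  match s1, s2 with
  | [::], _ => true
  | _ :: _, [::] => false
  | a :: s1', b :: s2' => (a < b) || ((a == b) && lex_le s1' s2')
  end.

Definition decmin_strong (D : E -> bool) : Prop :=
  strongly_connected D /\
  forall D' : E -> bool, strongly_connected D' ->
    lex_le (sorted_indeg D) (sorted_indeg D').

End Orient.

(* Reversing an s-t path P of a strongly connected orientation D moves one unit of in-degree
   from t to s, and the new orientation is still strongly connected exactly when every set
   containing t but not s is entered at least twice, e.g. when D has a second s-t path
   arc-disjoint from P.  If moreover indeg t >= indeg s + 2, the potential sum_v N^(indeg v),
   which for N > |V| is monotone for the order defining decreasing minimality, drops strictly.

   Conversely, assume no such pair of paths exists and fix a level j.  Let X be the set of
   vertices that no in-tight set (a set entered by exactly one arc) separates from some vertex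
   of in-degree > j.  By Menger's theorem for two paths, in-degrees are >= j on X and <= j off
   X.  Since the in-degree of sets is submodular, a union of in-tight sets avoiding a common
   vertex splits into disjoint in-tight sets, and X is an intersection of such unions; hence
   no strongly connected orientation D' enters X less often than D.  Summing in-degrees over X
   gives sum_v (indeg_D v - j)^+ <= sum_v (indeg_D' v - j)^+ for every j, which forces
   decreasing minimality. *)

From mathcomp Require Import all_boot zify.
Set Implicit Arguments. Unset Strict Implicit. Unset Printing Implicit Defensive.

(** * Sorted sequences and level sums *)

Lemma geq_trans : transitive geq.
Proof. by move=> y x z /= yx zy; apply: leq_trans zy yx. Qed.

Lemma sum_exp_le_size N x (s : seq nat) : 0 < N -> all (geq x) s ->
  \sum_(z <- s) N ^ z <= size s * N ^ x.
Proof.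
move=> N0; elim: s => [|z s IH] /=; first by rewrite big_nil.
by case/andP=> zx /IH le_s; rewrite big_cons mulSn leq_add // leq_pexp2l.
Qed.

Lemma lex_le_sum_exp N (a b : seq nat) : sorted geq a -> sorted geq b ->
  size a = size b -> size a < N -> lex_le a b ->
  \sum_(x <- a) N ^ x <= \sum_(y <- b) N ^ y.
Proof.
elim: a b => [|x a IH] [|y b] //= Sa Sb [size_ab] aN.
have N0 : 0 < N by apply: leq_ltn_trans aN.
case/orP => [xy|/andP [/eqP <- le_ab]]; last first.
  by rewrite !big_cons leq_add2l IH ?(path_sorted Sa) ?(path_sorted Sb) // ltnW.
have le_x : all (geq x) (x :: a) by rewrite /= leqnn (order_path_min geq_trans Sa).
apply: leq_trans (sum_exp_le_size N0 le_x) _; rewrite big_cons.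
apply: leq_trans (leq_addr _ _); apply: leq_trans (leq_pexp2l N0 xy).
by rewrite expnS leq_mul2r /= (ltnW aN) orbT.
Qed.

Lemma excess_lt_of_not_lex_le (a b : seq nat) : sorted geq a -> sorted geq b ->
  size a = size b -> ~~ lex_le a b ->
  exists j, \sum_(y <- b) (y - j) < \sum_(x <- a) (x - j).
Proof.
elim: a b => [|x a IH] [|y b] //= Sa Sb [size_ab].
case: (ltngtP x y) => [//|yx|<-] /=; last first.
  move=> /(IH b (path_sorted Sa) (path_sorted Sb) size_ab) [j lt_ab].
  by exists j; rewrite !big_cons ltn_add2l.
move=> _; exists y; rewrite !big_cons subnn big1_seq => [|z /andP [_ zb]].
  by move: yx; lia.
by apply/eqP; rewrite subn_eq0; apply: (allP (order_path_min geq_trans Sb)).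
Qed.

Section FunctionsOnFinType.
Variable T : finType.
Implicit Types (m : T -> nat).

Lemma sum_sort_map (r : rel nat) m (f : nat -> nat) :
  \sum_(z <- sort r [seq m v | v <- enum T]) f z = \sum_v f (m v).
Proof.
by rewrite (perm_big _ (permEl (perm_sort _ _))) big_map big_enum.
Qed.

Lemma sum_exp_transfer_lt N m (m' : T -> nat) s t : 1 < N -> m s + 2 <= m t ->
  (forall v, m' v + (t == v) = m v + (s == v)) ->
  \sum_v N ^ m' v < \sum_v N ^ m v.
Proof.
move=> N1 st_gap transfer.
have ts : t != s by apply: contraTneq st_gap => ->; lia.
have m's : m' s = (m s).+1 by have := transfer s; rewrite eqxx (negbTE ts); lia.
have m't : (m' t).+1 = m t by have := transfer t; rewrite eqxx eq_sym (negbTE ts); lia.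
have others v : v != s -> v != t -> m' v = m v.
  by move=> vs vt; have := transfer v; rewrite ![_ == v]eq_sym (negbTE vs) (negbTE vt); lia.
have split_st (g : T -> nat) :
    \sum_v g v = g s + g t + \sum_(v | (v != s) && (v != t)) g v.
  by rewrite (bigD1 s) //= (bigD1 t) /= ?ts // addnA.
rewrite (split_st (fun v => N ^ m' v)) (split_st (fun v => N ^ m v)).
rewrite (eq_bigr (fun v => N ^ m v)) => [|v /andP [vs vt]]; last by rewrite others.
rewrite ltn_add2r m's -m't !expnS.
have : N ^ m s < N ^ m' t by rewrite ltn_exp2l //; lia.
have : 0 < N ^ m s by rewrite expn_gt0 (ltnW N1).
nia.
Qed.

Lemma sum_excess_le m (m' : T -> nat) (X : {set T}) j :
  {in X, forall v, j <= m v} -> {in ~: X, forall v, m v <= j} ->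
  \sum_(v in X) m v <= \sum_(v in X) m' v ->
  \sum_v (m v - j) <= \sum_v (m' v - j).
Proof.
move=> geX leX le_sum.
rewrite (bigID [in X]) [X in _ <= X](bigID [in X]) /=.
rewrite [\sum_(v | v \notin X) (m v - j)]big1 => [|v vX]; last first.
  by apply/eqP; rewrite subn_eq0 leX // inE.
rewrite addn0; apply: leq_trans (leq_addr _ _).
have eqX : \sum_(v in X) m v = \sum_(v in X) ((m v - j) + j).
  by apply: eq_bigr => v /geX /subnK.
have leX' : \sum_(v in X) m' v <= \sum_(v in X) ((m' v - j) + j).
  by apply: leq_sum => v _; lia.
rewrite !big_split /= in eqX leX'; lia.
Qed.
End FunctionsOnFinType.

(** * Walks, paths and cuts *)

Section Orientations.
Variables (V E : finType) (end1 end2 : E -> V).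
Local Notation hd := (arc_head end1 end2).
Local Notation tl := (arc_tail end1 end2).
Local Notation dwalk := (dwalk end1 end2).
Local Notation dpath := (dpath end1 end2).
Local Notation indeg := (indeg end1 end2).
Local Notation strongly_connected := (strongly_connected end1 end2).

Implicit Types (D : E -> bool) (Z : {set V}) (p : seq E) (S : pred E).

Lemma dpath_uniq D x y p : dpath D x y p -> uniq p.
Proof. by case/andP=> _ /= /andP [_ /map_uniq]. Qed.

Lemma dpath_from D x y p z : dpath D x y p -> z \in x :: map (hd D) p ->
  exists2 q, dpath D z y q & {subset q <= p}.
Proof.
elim: p x => [|e p IH] x; first by rewrite inE => H /eqP ->; exists [::].
move=> H; rewrite in_cons => /predU1P [->|Hz]; first by exists (e :: p).
have /IH/(_ Hz) [q Hq Hqp] : dpath D (hd D e) y p.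
  by move: H; rewrite /dpath /= => /andP [/andP [_ ->]] /andP [_ ->].
by exists q => // f /Hqp; rewrite inE orbC => ->.
Qed.

Lemma dwalk_dpath D x y p : dwalk D x y p -> exists2 q, dpath D x y q & {subset q <= p}.
Proof.
elim: p x => [|e p IH] x /=.
  by move=> /eqP ->; exists [::]; rewrite /dpath /= ?eqxx.
case/andP=> /eqP Htl /IH [q Hq Hqp].
have sub_ep : {subset q <= e :: p} by move=> f /Hqp; rewrite inE orbC => ->.
case: (boolP (x \in hd D e :: map (hd D) q)) => Hx.
  by have [r Hr Hrq] := dpath_from Hq Hx; exists r => // f /Hrq /sub_ep.
exists (e :: q); last by move=> f; rewrite !inE => /predU1P [->|/Hqp ->]; rewrite ?eqxx ?orbT.
by move: Hq; rewrite /dpath /= Htl eqxx Hx => /andP [-> ->].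
Qed.

Lemma dwalk_telescope D (phi : V -> nat) x y p : dwalk D x y p ->
  \sum_(e <- p) phi (hd D e) + phi x = \sum_(e <- p) phi (tl D e) + phi y.
Proof.
elim: p x => [|e p IH] x /=; first by move=> /eqP ->; rewrite !big_nil.
by case/andP=> /eqP Ht /IH H; rewrite !big_cons Ht; lia.
Qed.

Definition enters D Z e := (hd D e \in Z) && (tl D e \notin Z).

Lemma dwalk_enters D Z x y p : dwalk D x y p -> x \notin Z -> y \in Z ->
  has (enters D Z) p.
Proof.
elim: p x => [|e p IH] x /=; first by move=> /eqP -> /negbTE ->.
case/andP=> /eqP Ht Hw Hx Hy; rewrite /enters Ht Hx andbT.
by case: (boolP (hd D e \in Z)) => //= Hh; apply: IH Hw Hh Hy.
Qed.

Definition arc_rel D S : rel V :=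
  fun x y => [exists e, [&& S e, tl D e == x & hd D e == y]].

Lemma connect_dwalk D S x y : connect (arc_rel D S) x y ->
  exists2 p, dwalk D x y p & all S p.
Proof.
move=> /connectP [q]; elim: q x => [|z q IH] x /=; first by move=> _ ->; exists [::] => /=.
case/andP; rewrite {1}/arc_rel => /existsP [e /and3P [Se /eqP Hx /eqP Hz]] Hq.
case/(IH _ Hq) => p Hp Sp.
by exists (e :: p); rewrite /= ?Se // Hx Hz eqxx.
Qed.

Lemma dpath_of_cuts D S x y :
  (forall Z, x \notin Z -> y \in Z -> [exists e, S e && enters D Z e]) ->
  exists2 p, dpath D x y p & all S p.
Proof.
move=> Hcut; pose R := [set v | connect (arc_rel D S) x v].
suff : y \in R.
  rewrite inE => /connect_dwalk [p /dwalk_dpath [q Hq Hqp] Sp].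
  by exists q => //; apply/allP => e /Hqp; apply/allP.
apply/negPn/negP => y_notin_R.
have xR : x \notin ~: R by rewrite !inE negbK connect0.
have yR : y \in ~: R by rewrite inE y_notin_R.
have /existsP [e /and3P [Se]] := Hcut (~: R) xR yR.
rewrite !inE negbK => /negP hd_out tl_in; apply/hd_out/(connect_trans tl_in).
by apply/connect1/existsP; exists e; rewrite Se !eqxx.
Qed.

Definition indeg_set D Z : nat := \sum_e enters D Z e.

Definition inner_arcs Z : nat := \sum_e ((end1 e \in Z) && (end2 e \in Z)).

Lemma indegE D v : indeg D v = \sum_e (hd D e == v).
Proof. by rewrite /indeg -sum1dep_card big_mkcond; apply: eq_bigr => e _; case: eqP. Qed.

Lemma sum_eq_mem (Z : {set V}) u : \sum_(v in Z) (u == v) = (u \in Z).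
Proof.
rewrite big_mkcond (bigD1 u) //= big1 => [|v /negbTE]; first by rewrite eqxx; case: (u \in Z).
by rewrite eq_sym => ->; case: (v \in Z).
Qed.

Lemma sum_hd_mem D Z : \sum_e (hd D e \in Z) = inner_arcs Z + indeg_set D Z.
Proof.
rewrite -big_split; apply: eq_bigr => e _ /=; rewrite /enters /arc_head /arc_tail.
by case: (D e); case: (end1 e \in Z); case: (end2 e \in Z).
Qed.

Lemma sum_indeg D Z : \sum_(v in Z) indeg D v = inner_arcs Z + indeg_set D Z.
Proof.
under eq_bigr do rewrite indegE.
by rewrite exchange_big -sum_hd_mem; apply: eq_bigr => e _; rewrite sum_eq_mem.
Qed.

Lemma indeg_set_gt0 D Z x y : strongly_connected D -> x \notin Z -> y \in Z ->
  0 < indeg_set D Z.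
Proof.
move=> /(_ x y) [p /andP [Hp _]] Hx Hy.
have /hasP [e _ He] := dwalk_enters Hp Hx Hy.
by rewrite /indeg_set (bigD1 e) //= He.
Qed.

Lemma indeg_set_gt0P D Z : reflect (exists e, enters D Z e) (0 < indeg_set D Z).
Proof.
rewrite lt0n sum_nat_eq0.
by apply: (iffP forallPn) => [] [e He]; exists e; move: He; case: (enters D Z e).
Qed.

Lemma strongly_connected_of_cuts D :
  (forall Z x y, x \notin Z -> y \in Z -> 0 < indeg_set D Z) -> strongly_connected D.
Proof.
move=> Hcut x y; have [|p Hp _] := @dpath_of_cuts D predT x y; last by exists p.
by move=> Z Hx Hy; have /indeg_set_gt0P [e He] := Hcut Z x y Hx Hy; apply/existsP; exists e.
Qed.

Definition reverse_on D p e := if e \in p then ~~ D e else D e.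

Lemma hd_reverse_on D p e : hd (reverse_on D p) e = if e \in p then tl D e else hd D e.
Proof. by rewrite /arc_head /arc_tail /reverse_on; case: (e \in p); case: (D e). Qed.

Lemma tl_reverse_on D p e : tl (reverse_on D p) e = if e \in p then hd D e else tl D e.
Proof. by rewrite /arc_head /arc_tail /reverse_on; case: (e \in p); case: (D e). Qed.

Lemma sum_hd_reverse_path D s t p (phi : V -> nat) : dpath D s t p ->
  \sum_e phi (hd (reverse_on D p) e) + phi t = \sum_e phi (hd D e) + phi s.
Proof.
move=> Hp; have /andP [Hw _] := Hp.
have Htel := dwalk_telescope phi Hw; rewrite !big_uniq ?(dpath_uniq Hp) // in Htel.
rewrite (bigID [in p]) [\sum_e phi (hd D e)](bigID [in p]) /=.
rewrite (eq_bigr (phi \o tl D)) => [|e He]; last by rewrite hd_reverse_on He.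
rewrite [X in _ + X + _](eq_bigr (phi \o hd D)) => [|e /negbTE He].
  by move: Htel => /=; lia.
by rewrite hd_reverse_on He.
Qed.

Lemma indeg_reverse_path D s t p v : dpath D s t p ->
  indeg (reverse_on D p) v + (t == v) = indeg D v + (s == v).
Proof. by move=> Hp; rewrite !indegE (sum_hd_reverse_path (fun x => (x == v) : nat) Hp). Qed.

Lemma indeg_set_reverse_path D s t p Z : dpath D s t p ->
  indeg_set (reverse_on D p) Z + (t \in Z) = indeg_set D Z + (s \in Z).
Proof.
move=> Hp; have := sum_hd_reverse_path (fun x => (x \in Z) : nat) Hp.
by rewrite /= !sum_hd_mem -!addnA => /addnI.
Qed.

Definition two_disjoint_dpaths D s t := exists p1 p2,
  [/\ dpath D s t p1, dpath D s t p2 & ~~ has (fun e => e \in p2) p1].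

Lemma indeg_set_gt1 D s t p1 p2 Z :
  dpath D s t p1 -> dpath D s t p2 -> ~~ has (fun e => e \in p2) p1 ->
  s \notin Z -> t \in Z -> 1 < indeg_set D Z.
Proof.
move=> /andP [H1 _] /andP [H2 _] /hasPn disj sZ tZ.
have /hasP [e1 e1p1 He1] := dwalk_enters H1 sZ tZ.
have /hasP [e2 e2p2 He2] := dwalk_enters H2 sZ tZ.
have e12 : e2 != e1 by apply: contraNneq (disj e1 e1p1) => <-.
by rewrite /indeg_set (bigD1 e1) // (bigD1 e2) /= ?e12 // He1 He2.
Qed.

Lemma strongly_connected_reverse_path D s t p1 p2 : strongly_connected D ->
  dpath D s t p1 -> dpath D s t p2 -> ~~ has (fun e => e \in p2) p1 ->
  strongly_connected (reverse_on D p1).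
Proof.
move=> HD H1 H2 disj; apply: strongly_connected_of_cuts => Z x y Hx Hy.
have := indeg_set_reverse_path Z H1; have := indeg_set_gt0 HD Hx Hy.
case: (boolP (s \in Z)) => sZ; case: (boolP (t \in Z)) => tZ /=; try lia.
by have := indeg_set_gt1 H1 H2 disj sZ tZ; lia.
Qed.

(** * Flows and two arc-disjoint paths *)

Definition flow_in D S v : nat := \sum_e (S e && (hd D e == v)).
Definition flow_out D S v : nat := \sum_e (S e && (tl D e == v)).

Definition is_flow D S s t k :=
  forall v, flow_in D S v + k * (s == v) = flow_out D S v + k * (t == v).

Lemma dpath_flow D s t p : dpath D s t p -> is_flow D [in p] s t 1.
Proof.
move=> Hp v; have /andP [Hw _] := Hp; rewrite !mul1n.
have seq_sum (f : E -> V) : \sum_(e <- p) (f e == v) = \sum_e ((e \in p) && (f e == v)).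
  rewrite big_uniq ?(dpath_uniq Hp) // big_mkcond.
  by apply: eq_bigr => e _; case: (e \in p).
by have := dwalk_telescope (fun x => (x == v) : nat) Hw; rewrite /= !seq_sum.
Qed.

Lemma sum_flow S (f : E -> V) Z :
  \sum_(v in Z) \sum_e (S e && (f e == v)) = \sum_e (S e && (f e \in Z)).
Proof.
rewrite exchange_big; apply: eq_bigr => e _.
by case: (S e); [apply: sum_eq_mem | apply: big1].
Qed.

Lemma flow_across D S s t k Z : is_flow D S s t k ->
  \sum_e (S e && (hd D e \in Z)) + k * (s \in Z)
  = \sum_e (S e && (tl D e \in Z)) + k * (t \in Z).
Proof.
move=> Hflow; rewrite -(sum_flow S (hd D)) -(sum_flow S (tl D)).
rewrite -(sum_eq_mem Z s) -(sum_eq_mem Z t) !big_distrr -!big_split.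
by apply: eq_bigr => v _; apply: Hflow.
Qed.

Lemma flow_dpath D S s t k : s != t -> is_flow D S s t k.+1 ->
  exists2 p, dpath D s t p & all S p.
Proof.
move=> st Hflow; apply: dpath_of_cuts => Z sZ tZ; apply: contraT => /existsPn noin.
have := flow_across Z Hflow; rewrite (negbTE sZ) tZ.
suff : \sum_e (S e && (hd D e \in Z)) <= \sum_e (S e && (tl D e \in Z)) by lia.
apply: leq_sum => e _; move: (noin e); rewrite /enters.
by case: (S e); case: (hd D e \in Z); case: (tl D e \in Z).
Qed.

Lemma flow_diff_path D S s t k p : is_flow D S s t k.+1 ->
  dpath D s t p -> all S p -> is_flow D [predD S & [in p]] s t k.
Proof.
move=> Hflow Hp Sp v; have := Hflow v; have := dpath_flow Hp v.
have split_p (f : E -> V) : \sum_e (S e && (f e == v))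
    = \sum_e ([predD S & [in p]] e && (f e == v)) + \sum_e ((e \in p) && (f e == v)).
  rewrite -big_split; apply: eq_bigr => e _ /=.
  by case: (boolP (e \in p)) => ep; rewrite /= ?addn0 // (allP Sp e ep).
rewrite /flow_in /flow_out !split_p; lia.
Qed.

Lemma flow2_two_disjoint_dpaths D S s t : s != t -> is_flow D S s t 2 ->
  two_disjoint_dpaths D s t.
Proof.
move=> st Hflow; have [p1 Hp1 Sp1] := flow_dpath st Hflow.
have [p2 Hp2 Sp2] := flow_dpath st (flow_diff_path Hflow Hp1 Sp1).
exists p1, p2; split=> //; apply/hasPn => e ep1; apply/negP => ep2.
by have := allP Sp2 e ep2; rewrite /= ep1.
Qed.

Lemma augment_flow D s t P Q : dpath D s t P -> dpath (reverse_on D P) s t Q ->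
  is_flow D (fun e => (e \in P) (+) (e \in Q)) s t 2.
Proof.
(* Arcs of P reversed back by Q cancel out. *)
move=> HP HQ v; have := dpath_flow HP v; have := dpath_flow HQ v.
suff : flow_out D [in P] v + flow_out (reverse_on D P) [in Q] v
         + flow_in D (fun e => (e \in P) (+) (e \in Q)) v
     = flow_in D [in P] v + flow_in (reverse_on D P) [in Q] v
         + flow_out D (fun e => (e \in P) (+) (e \in Q)) v by lia.
rewrite /flow_in /flow_out -!big_split; apply: eq_bigr => e _ /=.
rewrite hd_reverse_on tl_reverse_on.
by case: (e \in P); case: (e \in Q) => /=; rewrite ?addn0 // addnC.
Qed.

Lemma two_disjoint_dpaths_of_cuts D s t : strongly_connected D -> s != t ->
  (forall Z, s \notin Z -> t \in Z -> indeg_set D Z != 1) ->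
  two_disjoint_dpaths D s t.
Proof.
move=> HD st no_tight; have [P HP] := HD s t.
have [|Q HQ _] := @dpath_of_cuts (reverse_on D P) predT s t.
  move=> Z sZ tZ; have := indeg_set_reverse_path Z HP; rewrite tZ (negbTE sZ).
  have := indeg_set_gt0 HD sZ tZ; have /eqP := no_tight Z sZ tZ => ne1 gt0 Hrev.
  have /indeg_set_gt0P [e He] : 0 < indeg_set (reverse_on D P) Z by lia.
  by apply/existsP; exists e.
exact: flow2_two_disjoint_dpaths st (augment_flow HP HQ).
Qed.

(** * In-tight sets *)

Definition in_tight D Z := indeg_set D Z == 1.

Definition converse D e := ~~ D e.

Lemma indeg_set_converse D Z : indeg_set (converse D) (~: Z) = indeg_set D Z.
Proof.
apply: eq_bigr => e _; rewrite /enters /arc_head /arc_tail /converse !inE negbK andbC.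
by case: (D e).
Qed.

Lemma strongly_connected_converse D :
  strongly_connected D -> strongly_connected (converse D).
Proof.
move=> HD; apply: strongly_connected_of_cuts => Z x y Hx Hy.
rewrite -[Z]setCK indeg_set_converse.
by apply: (indeg_set_gt0 HD (x := y) (y := x)); rewrite inE ?negbK.
Qed.

Lemma in_tight_le D D' Z : strongly_connected D' -> in_tight D Z ->
  indeg_set D Z <= indeg_set D' Z.
Proof.
move=> HD' /eqP tZ; have /indeg_set_gt0P [e /andP [hZ tlZ]] : 0 < indeg_set D Z by rewrite tZ.
by rewrite tZ (indeg_set_gt0 HD' tlZ hZ).
Qed.

Lemma indeg_set_submod D Z1 Z2 :
  indeg_set D (Z1 :|: Z2) + indeg_set D (Z1 :&: Z2) <= indeg_set D Z1 + indeg_set D Z2.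
Proof.
rewrite -!big_split; apply: leq_sum => e _; rewrite /enters !inE.
by case: (hd D e \in Z1); case: (hd D e \in Z2); case: (tl D e \in Z1); case: (tl D e \in Z2).
Qed.

Lemma in_tightU D Z1 Z2 x w : strongly_connected D -> in_tight D Z1 -> in_tight D Z2 ->
  x \in Z1 :&: Z2 -> w \notin Z1 :|: Z2 -> in_tight D (Z1 :|: Z2).
Proof.
move=> HD /eqP t1 /eqP t2 xZ wZ.
have xU : x \in Z1 :|: Z2 by rewrite inE; case/setIP: xZ => ->.
have wI : w \notin Z1 :&: Z2 by apply: contra wZ; rewrite !inE => /andP [->].
have := indeg_set_submod D Z1 Z2; have := indeg_set_gt0 HD wZ xU.
have := indeg_set_gt0 HD wI xZ; rewrite /in_tight t1 t2 => ? ? ?; apply/eqP; lia.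
Qed.

Lemma in_tight_partition D (U : {set V}) w : strongly_connected D -> w \notin U ->
  (forall u, u \in U -> exists Z, [/\ in_tight D Z, u \in Z & Z \subset U]) ->
  exists P : {set {set V}},
    [/\ trivIset P, cover P = U & forall B, B \in P -> in_tight D B].
Proof.
move=> HD wU HU; pose tight_in_U B := in_tight D B && (B \subset U).
exists [set B | maxset tight_in_U B]; split.
- apply/trivIsetP => A B; rewrite !inE => maxA maxB neAB.
  rewrite -setI_eq0; apply: contraNT neAB => /set0Pn [x xAB].
  have /andP [tA sA] := maxsetp maxA; have /andP [tB sB] := maxsetp maxB.
  have wAB : w \notin A :|: B.
    by apply: contra wU; rewrite inE => /orP [/(subsetP sA)|/(subsetP sB)].
  have tAB : tight_in_U (A :|: B).
    by rewrite /tight_in_U (in_tightU HD tA tB xAB wAB) subUset sA sB.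
  apply/eqP; rewrite -(maxsetsup maxA tAB (subsetUl A B)).
  exact: maxsetsup maxB tAB (subsetUr A B).
- apply/setP => u; apply/bigcupP/idP => [[B]|uU].
    by rewrite inE => /maxsetp /andP [_ /subsetP]; apply.
  have [Z [tZ uZ sZ]] := HU u uU.
  have [A maxA sZA] := @maxset_exists _ tight_in_U Z (introT andP (conj tZ sZ)).
  by exists A; [rewrite inE | apply: (subsetP sZA)].
- by move=> B; rewrite inE => /maxsetp /andP [].
Qed.

Definition crossing_edges (P : {set {set V}}) : nat :=
  \sum_e [&& end1 e \in cover P, end2 e \in cover P & pblock P (end1 e) != pblock P (end2 e)].

Lemma mem_block (P : {set {set V}}) B x : trivIset P -> B \in P ->
  (x \in B) = (x \in cover P) && (pblock P x == B).
Proof.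
move=> TP PB; case: (boolP (x \in B)) => xB.
  by rewrite (def_pblock TP PB xB) eqxx andbT; apply/esym/bigcupP; exists B.
by apply/esym/negP => /andP [xP /eqP xB']; move: xB; rewrite -xB' mem_pblock xP.
Qed.

Lemma sum_blocks_enters (P : {set {set V}}) h t : trivIset P ->
  \sum_(B in P) ((h \in B) && (t \notin B)) =
  ((h \in cover P) && (t \notin cover P)) +
  [&& h \in cover P, t \in cover P & pblock P h != pblock P t].
Proof.
move=> TP; case: (boolP (h \in cover P)) => hP /=; last first.
  by rewrite big1 // => B PB; rewrite (mem_block h TP PB) (negbTE hP).
rewrite (bigD1 (pblock P h)) ?pblock_mem //= big1 => [|B /andP [PB neB]].
  rewrite mem_pblock hP (mem_block t TP (pblock_mem hP)) addn0.
  by case: (t \in cover P) => //=; rewrite eq_sym; case: eqP.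
by rewrite (mem_block h TP PB) hP eq_sym (negbTE neB).
Qed.

Lemma indeg_set_cover D (P : {set {set V}}) : trivIset P ->
  indeg_set D (cover P) + crossing_edges P = \sum_(B in P) indeg_set D B.
Proof.
move=> TP; rewrite /indeg_set exchange_big -big_split; apply: eq_bigr => e _ /=.
rewrite sum_blocks_enters // /enters /arc_head /arc_tail; case: (D e) => //.
by case: (end1 e \in cover P); case: (end2 e \in cover P) => //=; rewrite eq_sym.
Qed.

Lemma indeg_set_cover_le D D' (P : {set {set V}}) : trivIset P ->
  (forall B, B \in P -> indeg_set D B <= indeg_set D' B) ->
  indeg_set D (cover P) <= indeg_set D' (cover P).
Proof.
move=> TP le_blocks; have := indeg_set_cover D TP; have := indeg_set_cover D' TP.
have : \sum_(B in P) indeg_set D B <= \sum_(B in P) indeg_set D' B by apply: leq_sum.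
lia.
Qed.

Lemma indeg_set_bigcap_le D D' (F : {set {set V}}) :
  strongly_connected D -> strongly_connected D' ->
  (forall Z, Z \in F -> in_tight D Z) ->
  indeg_set D (\bigcap_(Z in F) Z) <= indeg_set D' (\bigcap_(Z in F) Z).
Proof.
move=> HD HD' tightF; set Q := \bigcap_(Z in F) Z.
have [->|[q qQ]] := set_0Vmem Q.
  by rewrite /indeg_set big1 // => e _; rewrite /enters inE.
(* ~: Q is a union of sets in-tight for the converse orientation, all avoiding q. *)
rewrite -(indeg_set_converse D) -(indeg_set_converse D').
have qQ' : q \notin ~: Q by rewrite inE negbK.
have [|P [TP <- tightP]] := in_tight_partition (strongly_connected_converse HD) qQ'.
  move=> u; rewrite inE => uQ.
  have /exists_inP [Z0 FZ0 uZ0] : [exists Z0 in F, u \notin Z0].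
    by apply: contraNT uQ => /exists_inPn allZ; apply/bigcapP => Z /allZ; rewrite negbK.
  exists (~: Z0); split; rewrite ?inE //; last by rewrite setCS; apply: bigcap_inf.
  by rewrite /in_tight indeg_set_converse; apply: tightF.
apply: indeg_set_cover_le TP _ => B PB.
exact: in_tight_le (strongly_connected_converse HD') (tightP B PB).
Qed.

Definition tight_decomposable D X := exists P : {set {set V}},
  [/\ trivIset P, cover P = X & forall B, B \in P -> exists2 F : {set {set V}},
     forall Z, Z \in F -> in_tight D Z & B = \bigcap_(Z in F) Z].

Lemma indeg_set_decomposable_le D D' X :
  strongly_connected D -> strongly_connected D' -> tight_decomposable D X ->
  indeg_set D X <= indeg_set D' X.
Proof.
move=> HD HD' [P [TP <- capP]]; apply: indeg_set_cover_le TP _ => B /capP [F tightF ->].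
exact: indeg_set_bigcap_le.
Qed.

Lemma tight_decomposableT D : tight_decomposable D setT.
Proof.
exists [set setT]; split; [exact: trivIset1 | exact: cover1 |].
by move=> B /set1P ->; exists set0 => [Z|]; rewrite ?inE ?big_set0.
Qed.

Lemma tight_decomposableI D X Y : tight_decomposable D X -> tight_decomposable D Y ->
  tight_decomposable D (X :&: Y).
Proof.
move=> [P1 [T1 <- cap1]] [P2 [T2 <- cap2]].
exists [set A :&: B | A in P1, B in P2]; split.
- apply/trivIsetP => _ _ /imset2P [A1 B1 PA1 PB1 ->] /imset2P [A2 B2 PA2 PB2 ->] ne.
  have [eA|neA] := eqVneq A1 A2; last first.
    by apply: disjointW (subsetIl _ _) (subsetIl _ _) ((trivIsetP T1) _ _ PA1 PA2 neA).
  have [eB|neB] := eqVneq B1 B2; first by move: ne; rewrite eA eB eqxx.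
  by apply: disjointW (subsetIr _ _) (subsetIr _ _) ((trivIsetP T2) _ _ PB1 PB2 neB).
- apply/setP => x; rewrite inE; apply/bigcupP/andP => [[_ /imset2P [A B PA PB ->]]|[x1 x2]].
    by rewrite inE => /andP [xA xB]; split; apply/bigcupP; [exists A | exists B].
  exists (pblock P1 x :&: pblock P2 x); last by rewrite inE !mem_pblock x1 x2.
  by apply/imset2P; exists (pblock P1 x) (pblock P2 x); rewrite ?pblock_mem.
- move=> _ /imset2P [A B PA PB ->].
  have [F1 tight1 ->] := cap1 A PA; have [F2 tight2 ->] := cap2 B PB.
  by exists (F1 :|: F2) => [Z /setUP [/tight1|/tight2]|]; rewrite ?bigcap_setU.
Qed.

Lemma tight_decomposable_avoiding D w : strongly_connected D ->
  tight_decomposable D (\bigcup_(Z | in_tight D Z && (w \notin Z)) Z).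
Proof.
move=> HD; set U := \bigcup_(Z | _) Z.
have wU : w \notin U by apply/bigcupP => [[Z /andP [_ /negP wZ]]].
have [|P [TP CP tightP]] := in_tight_partition HD wU.
  move=> u /bigcupP [Z ZU uZ]; exists Z; split=> //; first by case/andP: ZU.
  exact: (bigcup_sup Z ZU).
exists P; split=> // B PB; exists [set B] => [Z /set1P ->|]; last by rewrite big_set1.
exact: tightP.
Qed.

Lemma indeg_set_le_of_tight_separation D D' (X : {set V}) :
  strongly_connected D -> strongly_connected D' ->
  (forall w x, w \notin X -> x \in X -> exists Z, [/\ in_tight D Z, x \in Z & w \notin Z]) ->
  indeg_set D X <= indeg_set D' X.
Proof.
move=> HD HD' sepX; apply: indeg_set_decomposable_le => //.
have -> : X = \bigcap_(w in ~: X) \bigcup_(Z | in_tight D Z && (w \notin Z)) Z.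
  apply/setP => x; apply/idP/bigcapP => [xX w|xU].
    by rewrite inE => /sepX /(_ xX) [Z [tZ xZ wZ]]; apply/bigcupP; exists Z; rewrite ?tZ.
  apply: contraT => xX; have xcX : x \in ~: X by rewrite inE.
  by have /bigcupP [Z /andP [_ /negP]] := xU x xcX.
apply: (big_ind (tight_decomposable D)); first exact: tight_decomposableT.
  exact: tight_decomposableI.
by move=> w _; apply: tight_decomposable_avoiding.
Qed.

(** * Decreasingly minimal orientations *)

Lemma sorted_indeg_sorted D : sorted geq (sorted_indeg end1 end2 D).
Proof. by apply: sort_sorted => a b; apply: leq_total. Qed.

Lemma size_sorted_indeg D : size (sorted_indeg end1 end2 D) = #|V|.
Proof. by rewrite size_sort size_map -cardE. Qed.

Lemma not_decmin_of_disjoint_dpaths D s t : strongly_connected D ->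
  indeg D s + 2 <= indeg D t -> two_disjoint_dpaths D s t -> ~ decmin_strong end1 end2 D.
Proof.
move=> HD gap [p1 [p2 [H1 H2 disj]]] [_ Hmin].
have HD1 := strongly_connected_reverse_path HD H1 H2 disj.
have N1 : 1 < #|V|.+2 by [].
have := sum_exp_transfer_lt N1 gap (fun v => indeg_reverse_path v H1).
have := lex_le_sum_exp (N := #|V|.+2) (sorted_indeg_sorted D)
  (sorted_indeg_sorted (reverse_on D p1)) _ _ (Hmin _ HD1).
rewrite !size_sorted_indeg /sorted_indeg !sum_sort_map => /(_ erefl (leqnSn _)).
by rewrite leqNgt => /negP.
Qed.

Lemma excess_le_of_no_disjoint_dpaths D D' j :
  strongly_connected D -> strongly_connected D' ->
  (forall s t, indeg D s + 2 <= indeg D t -> ~ two_disjoint_dpaths D s t) ->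
  \sum_v (indeg D v - j) <= \sum_v (indeg D' v - j).
Proof.
move=> HD HD' no_paths.
pose separates h v := [exists Z, [&& in_tight D Z, h \in Z & v \notin Z]].
pose X := [set v | [exists h, (j < indeg D h) && ~~ separates h v]].
apply: (sum_excess_le (X := X)) => [v|v|].
- rewrite inE => /existsP [h /andP [jh nsep]].
  have [-> | vh] := eqVneq v h; first exact: ltnW.
  rewrite leqNgt; apply/negP => vj; apply: (no_paths v h); first lia.
  apply: two_disjoint_dpaths_of_cuts HD vh _ => Z vZ hZ; apply: contra nsep => tZ.
  by apply/existsP; exists Z; rewrite /in_tight tZ hZ vZ.
- rewrite !inE leqNgt; apply: contra => jv; apply/existsP; exists v; rewrite jv.
  by apply/existsPn => Z; case: (v \in Z); rewrite !andbF.
rewrite !sum_indeg leq_add2l; apply: indeg_set_le_of_tight_separation => // w x.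
rewrite !inE => wX /existsP [h /andP [jh nsep]].
have /existsP [Z /and3P [tZ hZ wZ]] : separates h w.
  by apply: contraNT wX => nsep'; apply/existsP; exists h; rewrite jh.
exists Z; split=> //; apply: contraNT nsep => xZ.
by apply/existsP; exists Z; rewrite tZ hZ xZ.
Qed.

Lemma decmin_of_no_disjoint_dpaths D : strongly_connected D ->
  (forall s t, indeg D s + 2 <= indeg D t -> ~ two_disjoint_dpaths D s t) ->
  decmin_strong end1 end2 D.
Proof.
move=> HD no_paths; split=> // D' HD'; apply/negPn/negP => /excess_lt_of_not_lex_le.
case/(_ (sorted_indeg_sorted D) (sorted_indeg_sorted D')) => [|j].
  by rewrite !size_sorted_indeg.
rewrite /sorted_indeg !sum_sort_map ltnNge => /negP; apply.
exact: excess_le_of_no_disjoint_dpaths.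
Qed.
End Orientations.

Theorem theorem6p1 (V E : finType) (end1 end2 : E -> V) :
  (exists D0 : E -> bool, strongly_connected end1 end2 D0) ->
  forall D : E -> bool, strongly_connected end1 end2 D ->
  (decmin_strong end1 end2 D <->
   ~ (exists s t : V,
        indeg end1 end2 D s + 2 <= indeg end1 end2 D t /\
        exists p1 p2 : seq E,
          [/\ dpath end1 end2 D s t p1, dpath end1 end2 D s t p2
            & ~~ has (fun e => e \in p2) p1])).
Proof.
move=> _ D HD; split=> [decmin [s [t [gap paths]]] | no_paths].
  exact: not_decmin_of_disjoint_dpaths HD gap paths decmin.
apply: decmin_of_no_disjoint_dpaths => // s t gap paths.
by apply: no_paths; exists s, t.
Qed.
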